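(* Let $(Y,X,A)$ be a random triple with $Y\in\mathbb{R}$, $X\in\mathcal{X}\subset\mathbb{R}^d$ having density $p(x)$, and $A\in\{0,1\}$, with $\mathbb{E}[Y^2]<\infty$. Define the response functions $\mu_a(x)=\mathbb{E}[Y\mid X=x,A=a]$ for $a\in\{0,1\}$, the propensity score $e(x)=\mathbb{P}(A=1\mid X=x)$, the conditional mean outcome $m(x)=\mathbb{E}[Y\mid X=x]$, and $\tau(x)=\mu_1(x)-\mu_0(x)$. For $a\in\{0,1\}$ let $\sigma_y^2(x;a)=\int (y-\mu_a(x))^2\, p(y\mid X=x, A=a)\,dy$ and $\tilde\sigma_B^2(a)=\int_{\mathcal{X}}\sigma_y^2(x;a)\,p(x;a)\,dx$, where $p(x;a)$ denotes the joint density of $(X=x,A=a)$. Let $f:\mathcal{X}\times\{0,1\}\to\mathbb{R}$ be an outcome model (with $\mathbb{E}[f(X,a)^2]<\infty$) and $\tau_f(x)=f(x,1)-f(x,0)$. Define $$R\text{-risk}^*(f)=\mathbb{E}\Big[\big((Y-m(X))-(A-e(X))\,\tau_f(X)\big)^2\Big].$$ Then $$R\text{-risk}^*(f)=\int_{\mathcal{X}} e(x)\big(1-e(x)\big)\big(\tau(x)-\tau_f(x)\big)^2\,p(x)\,dx+\tilde\sigma_B^2(1)+\tilde\sigma_B^2(0).$$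
   Context: Setting of binary-treatment causal inference in the potential outcomes framework; under the standard strong ignorability assumptions $\tau(x)=\mu_1(x)-\mu_0(x)$ is the conditional average treatment effect, and $\int (\tau(x)-\tau_f(x))^2p(x)dx$ is the oracle ''$\tau$-risk'' of $f$. The risk $R\text{-risk}^*$ is the semi-oracle R-risk, using the true nuisances $m$ and $e$. *)

From HB Require Import structures.
From mathcomp Require Import all_boot all_order all_algebra.
From mathcomp Require Import all_classical all_reals all_analysis.

Set Implicit Arguments.
Unset Strict Implicit.
Unset Printing Implicit Defensive.

Import Order.TTheory GRing.Theory Num.Theory.
Import numFieldNormedType.Exports.

Local Open Scope classical_set_scope.
Local Open Scope ring_scope.
Local Open Scope ereal_scope.

(* Model of the random triple (Y, X, A):
   - X takes values in a measurable space T, with density p w.r.t. a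
     reference measure mu (Lebesgue measure on X ⊂ R^d in the paper);
   - given X = x, A ~ Bernoulli(e x)  (so e is the propensity score);
   - given X = x, A = a, the conditional law of Y is the probability
     measure K a x on R (a probability kernel from T to R).
   The treatment A ∈ {0,1} is encoded as a boolean (true = 1). *)

Section model.
Context {R : realType} {d : measure_display} {T : measurableType d}.
Variables (mu : {measure set T -> \bar R}) (p e : T -> R)
          (K : bool -> R.-pker T ~> R).

Definition condE (g : R -> bool -> \bar R) (x : T) : \bar R :=
  (e x)%:E * \int[K true x]_y g y true
  + (1 - e x)%:E * \int[K false x]_y g y false.

Definition Expect (g : R -> T -> bool -> \bar R) : \bar R :=
  \int[mu]_x ((p x)%:E * condE (fun y a => g y x a) x).

Definition pxa (x : T) (a : bool) : R :=
  p x * (if a then e x else 1 - e x)%R.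

Definition resp (a : bool) (x : T) : R := fine (\int[K a x]_y y%:E).

Definition mout (x : T) : R := fine (condE (fun y _ => y%:E) x).

Definition tau (x : T) : R := (resp true x - resp false x)%R.

Definition sigma2 (a : bool) (x : T) : \bar R :=
  \int[K a x]_y (((y - resp a x) ^+ 2)%R)%:E.

Definition sigmaB2 (a : bool) : \bar R :=
  \int[mu]_x ((pxa x a)%:E * sigma2 a x).

Definition tau_f (f : T -> bool -> R) (x : T) : R := (f x true - f x false)%R.

Definition R_risk_star (f : T -> bool -> R) : \bar R :=
  Expect (fun y x a =>
    ((((y - mout x) - ((a%:R : R) - e x) * tau_f f x) ^+ 2)%R)%:E).

End model.

From HB Require Import structures.
From mathcomp Require Import all_boot all_order all_algebra.
From mathcomp Require Import all_classical all_reals all_analysis.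
From mathcomp Require Import measurable_realfun ring lra.

Import Order.TTheory GRing.Theory Num.Theory.
Import numFieldNormedType.Exports.

Local Open Scope classical_set_scope.
Local Open Scope ring_scope.
Local Open Scope ereal_scope.

(* Fix x and condition on A.  Since m = e mu_1 + (1 - e) mu_0, the residual is
   Y - (m + (1 - e) tau_f) when A = 1 and Y - (m - e tau_f) when A = 0.  The
   bias-variance identity E (Y - c)^2 = Var Y + (E Y - c)^2 under each
   conditional law of Y turns the two conditional risks into
   sigma_y^2(x;1) + (1 - e)^2 (tau - tau_f)^2 and sigma_y^2(x;0) + e^2 (tau - tau_f)^2;
   weighting them by e and 1 - e leaves e (1 - e) (tau - tau_f)^2.  Integrating
   against p is linearity of nonnegative integrals.  Everything lives in
   [0, +oo]: if a conditional law of positive weight has no finite mean, both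
   sides are +oo. *)

Section ereal_mixture.
Context {R : realType}.

Lemma fine_mixture (a b : R) (x y : \bar R) :
  (a = 0%R \/ x \is a fin_num) -> (b = 0%R \/ y \is a fin_num) ->
  fine (a%:E * x + b%:E * y) = (a * fine x + b * fine y)%R.
Proof.
case=> [->|xfin] [->|yfin]; rewrite ?mul0e ?mul0r ?add0e ?adde0 ?add0r ?addr0 //.
- by rewrite -[in LHS](fineK yfin).
- by rewrite -[in LHS](fineK xfin).
- by rewrite -[in LHS](fineK xfin) -[in LHS](fineK yfin).
Qed.

Lemma ge0_mixture_regroup (p a b x1 x0 : R) (S1 S0 : \bar R) :
  (0 <= p)%R -> (0 <= a)%R -> (0 <= b)%R -> (0 <= x1)%R -> (0 <= x0)%R ->
  0 <= S1 -> 0 <= S0 ->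
  p%:E * (a%:E * (S1 + x1%:E) + b%:E * (S0 + x0%:E)) =
  (p * (a * x1 + b * x0))%:E + ((p * a)%:E * S1 + (p * b)%:E * S0).
Proof.
move=> p0 a0 b0 x10 x00 S10 S00.
have aS1 : 0 <= a%:E * S1 by rewrite mule_ge0.
have bS0 : 0 <= b%:E * S0 by rewrite mule_ge0.
have -> : a%:E * (S1 + x1%:E) = a%:E * S1 + (a * x1)%:E by rewrite ge0_muleDr.
have -> : b%:E * (S0 + x0%:E) = b%:E * S0 + (b * x0)%:E by rewrite ge0_muleDr.
rewrite addeACA addeC !ge0_muleDr ?adde_ge0 ?lee_fin ?mulr_ge0 //.
by rewrite !muleA -!EFinM mulrDr EFinD.
Qed.

Lemma EFinD_eq_or_pinfty (r s : R) (x : \bar R) :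
  x = +oo \/ r = s -> r%:E + x = s%:E + x.
Proof. by case=> [->|->]. Qed.

End ereal_mixture.

Section second_moment.
Context {R : realType}.
Variable P : {measure set R -> \bar R}.
Hypothesis P1 : P setT = 1.

Definition mean : R := fine (\int[P]_y y%:E).

Lemma measurable_sqr_sub (c : R) :
  measurable_fun setT (fun y : R => (((y - c) ^+ 2)%R)%:E).
Proof. by apply/measurable_EFinP; apply: measurable_funX; exact: measurable_funB. Qed.

Lemma integral_sqr_sub_ge0 (c : R) : 0 <= \int[P]_y (((y - c) ^+ 2)%R)%:E.
Proof. by apply: integral_ge0 => y _; rewrite lee_fin sqr_ge0. Qed.

Lemma prob_integrable_cst (k : R) : P.-integrable setT (fun _ => k%:E).
Proof.
apply/integrableP; split; first exact: measurable_cst.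
by rewrite integral_cst //= P1 mule1 ltry.
Qed.

Lemma prob_integral_cst (k : R) : \int[P]_y k%:E = k%:E.
Proof. by rewrite integral_cst //= P1 mule1. Qed.

Lemma integrable_id_of_sqr : P.-integrable setT (fun y => ((y ^+ 2)%R)%:E) ->
  P.-integrable setT (fun y => y%:E).
Proof.
move=> sqrI.
have sqr1I : P.-integrable setT (fun y => ((1 + y ^+ 2)%R)%:E).
  under eq_fun do rewrite EFinD.
  exact: integrableD (prob_integrable_cst 1) sqrI.
apply: (le_integrable measurableT _ _ sqr1I); first exact: EFin_measurable.
move=> y _; rewrite lee_fin; apply: le_trans (ler_norm _).
have : (`|y| ^+ 2 = y ^+ 2)%R by rewrite real_normK ?num_real.
have : (0 <= `|y|)%R by [].
nra.
Qed.

Lemma integrable_sqr_of_sqr_sub (c : R) :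
  P.-integrable setT (fun y => (((y - c) ^+ 2)%R)%:E) ->
  P.-integrable setT (fun y => ((y ^+ 2)%R)%:E).
Proof.
move=> sqrcI.
have boundI : P.-integrable setT (fun y => ((2 * (y - c) ^+ 2 + 2 * c ^+ 2)%R)%:E).
  under eq_fun do rewrite EFinD EFinM.
  apply: integrableD (prob_integrable_cst _) => //.
  exact: (integrableZl measurableT 2%R sqrcI).
apply: (le_integrable measurableT _ _ boundI).
  by apply/measurable_EFinP; exact: measurable_funX.
move=> y _; rewrite lee_fin (ger0_norm (sqr_ge0 y)); apply: le_trans (ler_norm _).
by have := sqr_ge0 (y - 2 * c)%R; nra.
Qed.

Lemma integral_sqr_sub_pinfty (c : R) :
  ~ P.-integrable setT (fun y => ((y ^+ 2)%R)%:E) ->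
  \int[P]_y (((y - c) ^+ 2)%R)%:E = +oo.
Proof.
move=> sqrNI; apply/eqP; rewrite -leye_eq leNgt; apply/negP => fin.
apply/sqrNI/(integrable_sqr_of_sqr_sub c)/integrableP; split.
  exact: measurable_sqr_sub.
by under eq_integral do rewrite gee0_abs ?lee_fin ?sqr_ge0 //.
Qed.

Lemma integral_sqr_sub_cst (c : R) :
  \int[P]_y (((y - c) ^+ 2)%R)%:E =
  \int[P]_y (((y - mean) ^+ 2)%R)%:E + (((mean - c) ^+ 2)%R)%:E.
Proof.
have [sqrI|sqrNI] := pselect (P.-integrable setT (fun y => ((y ^+ 2)%R)%:E)); last first.
  by rewrite !integral_sqr_sub_pinfty.
have idI := integrable_id_of_sqr sqrI.
have expand c' : \int[P]_y (((y - c') ^+ 2)%R)%:E =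
    \int[P]_y ((y ^+ 2)%R)%:E + (- (2 * c'))%:E * \int[P]_y y%:E + ((c' ^+ 2)%R)%:E.
  rewrite (eq_integral (fun y : R =>
    ((y ^+ 2)%R)%:E + (- (2 * c'))%:E * y%:E + ((c' ^+ 2)%R)%:E)); last first.
    by move=> y _; rewrite -!EFinM -!EFinD; congr EFin; ring.
  have linI : P.-integrable setT (fun y => (- (2 * c'))%:E * y%:E).
    exact: integrableZl.
  rewrite integralD ?integralD ?integralZl ?prob_integral_cst //.
  - exact: integrableD.
  - exact: prob_integrable_cst.
rewrite !expand -(fineK (integrable_fin_num measurableT sqrI)).
rewrite -(fineK (integrable_fin_num measurableT idI)) -/mean.
by rewrite -!EFinM -!EFinD; congr EFin; ring.
Qed.

Lemma mean_fin_num_or_variance_pinfty (w : R) : (0 <= w)%R ->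
  (w = 0%R \/ \int[P]_y y%:E \is a fin_num) \/
  w%:E * \int[P]_y (((y - mean) ^+ 2)%R)%:E = +oo.
Proof.
move=> w0; have [meanfin|meanNfin] := boolP (\int[P]_y y%:E \is a fin_num).
  by left; right.
have [->|w_neq0] := eqVneq w 0%R; first by left; left.
right; rewrite integral_sqr_sub_pinfty ?gt0_muley ?lte_fin ?lt0r ?w_neq0 // => sqrI.
by move/negP: meanNfin; apply; exact: integrable_fin_num (integrable_id_of_sqr sqrI).
Qed.

End second_moment.

Section conditional_risk.
Context {R : realType}.
Variables (P1 P0 : {measure set R -> \bar R}).
Hypotheses (P1_1 : P1 setT = 1) (P0_1 : P0 setT = 1).

Lemma conditional_risk_decomposition (p e t : R) :
  (0 <= p)%R -> (0 <= e <= 1)%R ->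
  let m := fine (e%:E * \int[P1]_y y%:E + (1 - e)%:E * \int[P0]_y y%:E) in
  p%:E * (e%:E * \int[P1]_y ((((y - m) - (1 - e) * t) ^+ 2)%R)%:E
          + (1 - e)%:E * \int[P0]_y ((((y - m) - (0 - e) * t) ^+ 2)%R)%:E)
  = ((e * (1 - e) * (mean P1 - mean P0 - t) ^+ 2 * p)%R)%:E
    + ((p * e)%R)%:E * \int[P1]_y (((y - mean P1) ^+ 2)%R)%:E
    + ((p * (1 - e))%R)%:E * \int[P0]_y (((y - mean P0) ^+ 2)%R)%:E.
Proof.
move=> p0 /andP[e0 e1] m.
have ce0 : (0 <= 1 - e)%R by rewrite subr_ge0.
rewrite (eq_integral (fun y : R => (((y - (m + (1 - e) * t)) ^+ 2)%R)%:E)); last first.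
  by move=> y _; congr EFin; ring.
rewrite [X in _ + _ * X]
  (eq_integral (fun y : R => (((y - (m - e * t)) ^+ 2)%R)%:E)); last first.
  by move=> y _; congr EFin; ring.
rewrite [in LHS](integral_sqr_sub_cst _ P1_1) [in LHS](integral_sqr_sub_cst _ P0_1).
rewrite ge0_mixture_regroup ?sqr_ge0 ?integral_sqr_sub_ge0 // -addeA.
apply: EFinD_eq_or_pinfty.
have [->|p_neq0] := eqVneq p 0%R; first by right; rewrite !(mul0r, mulr0).
have S1w0 : 0 <= (p * e)%:E * \int[P1]_y (((y - mean P1) ^+ 2)%R)%:E.
  by rewrite mule_ge0 ?integral_sqr_sub_ge0 ?lee_fin ?mulr_ge0.
have S0w0 : 0 <= (p * (1 - e))%:E * \int[P0]_y (((y - mean P0) ^+ 2)%R)%:E.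
  by rewrite mule_ge0 ?integral_sqr_sub_ge0 ?lee_fin ?mulr_ge0.
have [h1|->] := mean_fin_num_or_variance_pinfty _ P1_1 _ (mulr_ge0 p0 e0); last first.
  by left; rewrite addye // -ltNye (lt_le_trans ltNy0).
have [h0|->] := mean_fin_num_or_variance_pinfty _ P0_1 _ (mulr_ge0 p0 ce0); last first.
  by left; rewrite addey // -ltNye (lt_le_trans ltNy0).
have weight0 w : (p * w = 0 -> w = 0)%R.
  by move/eqP; rewrite mulf_eq0 (negbTE p_neq0) => /eqP.
have -> : m = (e * mean P1 + (1 - e) * mean P0)%R.
  by apply: fine_mixture; [case: h1 => [/weight0|]; auto|case: h0 => [/weight0|]; auto].
by right; ring.
Qed.

End conditional_risk.

Section model.
Context {R : realType} {d : measure_display} {T : measurableType d}.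
Variable K : bool -> R.-pker T ~> R.

Lemma measurable_resp a : measurable_fun setT (resp K a).
Proof.
have -> : resp K a = fine \o (fun x => \int[K a x]_y (EFin \o id)^\+ y
                                     - \int[K a x]_y (EFin \o id)^\- y).
  by apply/funext => x; rewrite /resp /= integralE.
apply: measurableT_comp; first exact: (fine_measurable measurableT).
apply: emeasurable_funB; apply: measurable_fun_integral_kernel.
- exact: measurable_kernel.
- by move=> y; exact: funepos_ge0.
- exact/measurable_funepos/measurable_EFinP.
- exact: measurable_kernel.
- by move=> y; exact: funeneg_ge0.
- exact/measurable_funeneg/measurable_EFinP.
Qed.

Lemma measurable_sigma2 a : measurable_fun setT (sigma2 K a).
Proof.
apply: (measurable_fun_integral_finite_kernel
          (fun z : T * R => (((z.2 - resp K a z.1) ^+ 2)%R)%:E) (K a)).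
  by move=> z; rewrite lee_fin sqr_ge0.
apply/measurable_EFinP; apply: measurable_funX; apply: measurable_funB.
  exact: measurable_snd.
exact: measurableT_comp (measurable_resp a) measurable_fst.
Qed.

Variables (p e : T -> R) (f : T -> bool -> R).
Hypotheses (p_ge0 : forall x, (0 <= p x)%R) (e01 : forall x, (0 <= e x <= 1)%R).
Hypotheses (mp : measurable_fun setT p) (me : measurable_fun setT e).
Hypothesis mf : forall a, measurable_fun setT (fun x => f x a).

Lemma R_risk_integrandE x :
  (p x)%:E * condE e K (fun y a =>
     ((((y - mout e K x) - ((a%:R : R) - e x) * tau_f f x) ^+ 2)%R)%:E) x =
  ((e x * (1 - e x) * (tau K x - tau_f f x) ^+ 2 * p x)%R)%:E
  + (pxa p e x true)%:E * sigma2 K true x + (pxa p e x false)%:E * sigma2 K false x.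
Proof.
exact: conditional_risk_decomposition (K true x) (K false x) (prob_kernel x)
  (prob_kernel x) (p x) (e x) (tau_f f x) (p_ge0 x) (e01 x).
Qed.

Lemma measurable_weighted_sigma2 a :
  measurable_fun setT (fun x => (pxa p e x a)%:E * sigma2 K a x).
Proof.
apply: emeasurable_funM; last exact: measurable_sigma2.
apply/measurable_EFinP; apply: measurable_funM => //.
by case: a => //; apply: measurable_funB => //; exact: measurable_cst.
Qed.

Lemma weighted_sigma2_ge0 a x : 0 <= (pxa p e x a)%:E * sigma2 K a x.
Proof.
have /andP[e0 e1] := e01 x.
apply: mule_ge0; last exact: integral_sqr_sub_ge0.
by rewrite lee_fin; case: a; rewrite mulr_ge0 ?subr_ge0.
Qed.

Lemma measurable_weighted_tau_err : measurable_fun setT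
  (fun x => ((e x * (1 - e x) * (tau K x - tau_f f x) ^+ 2 * p x)%R)%:E).
Proof.
have mtau : measurable_fun setT (tau K).
  by apply: measurable_funB; exact: measurable_resp.
have mtau_f : measurable_fun setT (tau_f f) by exact: measurable_funB.
apply/measurable_EFinP; apply: measurable_funM => //; apply: measurable_funM.
  by apply: measurable_funM => //; apply: measurable_funB => //; exact: measurable_cst.
by apply: measurable_funX; exact: measurable_funB.
Qed.

Lemma weighted_tau_err_ge0 x :
  0 <= ((e x * (1 - e x) * (tau K x - tau_f f x) ^+ 2 * p x)%R)%:E.
Proof.
have /andP[e0 e1] := e01 x.
by rewrite lee_fin mulr_ge0 // mulr_ge0 ?sqr_ge0 // mulr_ge0 // subr_ge0.
Qed.

End model.

Theorem proposition2 (R : realType) (d : measure_display) (T : measurableType d)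
  (mu : {measure set T -> \bar R}) (p e : T -> R) (K : bool -> R.-pker T ~> R)
  (f : T -> bool -> R) :
  measurable_fun [set: T] p ->
  (forall x, (0 <= p x)%R) ->
  \int[mu]_x (p x)%:E = 1 ->
  measurable_fun [set: T] e ->
  (forall x, (0 <= e x <= 1)%R) ->
  Expect mu p e K (fun y _ _ => ((y ^+ 2)%R)%:E) < +oo ->
  (forall a, measurable_fun [set: T] (fun x => f x a)) ->
  (forall a, \int[mu]_x ((p x * f x a ^+ 2)%R)%:E < +oo) ->
  R_risk_star mu p e K f =
    \int[mu]_x ((e x * (1 - e x) * (tau K x - tau_f f x) ^+ 2 * p x)%R)%:E
    + sigmaB2 mu p e K true + sigmaB2 mu p e K false.
Proof.
move=> mp p_ge0 _ me e01 _ mf _.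
rewrite /R_risk_star /Expect; under eq_integral do rewrite R_risk_integrandE //.
rewrite ge0_integralD //.
- rewrite ge0_integralD //.
  + by move=> x _; exact: weighted_tau_err_ge0.
  + exact: measurable_weighted_tau_err.
  + by move=> x _; exact: weighted_sigma2_ge0.
  + exact: measurable_weighted_sigma2.
- by move=> x _; rewrite adde_ge0 ?weighted_tau_err_ge0 ?weighted_sigma2_ge0.
- apply: emeasurable_funD; first exact: measurable_weighted_tau_err.
  exact: measurable_weighted_sigma2.
- by move=> x _; exact: weighted_sigma2_ge0.
- exact: measurable_weighted_sigma2.
Qed.
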